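(* Let $A\subseteq[0,1]^d$ be an up-closed $0/1$-polytope and $B\subseteq[0,1]^d$ a convex set with $A\subseteq B$ and $d':=\dim(A)=\dim(B)$. If $d'=1$, then $A=B$. Otherwise, (i) $\operatorname{rdist}(A,B)\geq\frac{1}{d'-1}\cdot\frac{\operatorname{LPgapMin}(A,B)}{1+\operatorname{LPgapMin}(A,B)}$, and (ii) $\operatorname{LPgapMin}(A,B)\geq\frac{\operatorname{rdist}(A,B)}{d'-1-\operatorname{rdist}(A,B)}$.
   Context: A $0/1$-polytope $P\subseteq[0,1]^d$ (all vertices in $\{0,1\}^d$) is up-closed if $x\in P$, $y\in[0,1]^d$, $x\leq y$ imply $y\in P$. $\operatorname{LPgapMin}(A,B)=\inf\{\varepsilon\geq0: \inf_{a\in A}c^\intercal a\leq(1+\varepsilon)\inf_{b\in B}c^\intercal b\ \ \forall c\in\mathbb{R}^d_{\geq0}\}$. For nonempty convex $A\subseteq B\subseteq\mathbb{R}^d$, $\operatorname{rdist}(A,B)=\sup_{\pi}\frac{\sup_{b\in B}\inf_{a\in A}|\pi(b)-\pi(a)|}{\sup_{a,a'\in A}|\pi(a)-\pi(a')|}$ over all linear $\pi:\mathbb{R}^d\to\mathbb{R}$, with fractions having denominator $\infty$ and $0/0$ interpreted as $0$. *)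

From HB Require Import structures.
From mathcomp Require Import all_boot all_order all_algebra.
From mathcomp Require Import all_classical all_reals ereal.
Set Implicit Arguments. Unset Strict Implicit. Unset Printing Implicit Defensive.
Import Order.TTheory GRing.Theory Num.Theory.
Local Open Scope classical_set_scope.
Local Open Scope ring_scope.

Section Defs.
Variables (R : realType) (d : nat).
Implicit Types (A B S : set 'rV[R]_d).

Definition cube : set 'rV[R]_d := [set x | forall i, 0 <= x 0 i <= 1].

Definition vle (x y : 'rV[R]_d) : Prop := forall i, x 0 i <= y 0 i.

Definition dotv (c x : 'rV[R]_d) : R := \sum_(i < d) c 0 i * x 0 i.

Definition conv_hull (n : nat) (V : 'I_n -> 'rV[R]_d) : set 'rV[R]_d :=
  [set x | exists lam : 'I_n -> R, (forall k, 0 <= lam k) /\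
           \sum_(k < n) lam k = 1 /\ x = \sum_(k < n) lam k *: V k].

Definition is01polytope A : Prop :=
  exists (n : nat) (V : 'I_n.+1 -> 'rV[R]_d),
    (forall k i, V k 0 i = 0 \/ V k 0 i = 1) /\ A = conv_hull V.

Definition upclosed A : Prop :=
  forall x y, A x -> cube y -> vle x y -> A y.

Definition convex_set S : Prop :=
  forall x y (t : R), S x -> S y -> 0 <= t <= 1 -> S (t *: x + (1 - t) *: y).

(* S contains k+1 affinely independent points x0, x0 + row_i M *)
Definition aff_dim_ge S (k : nat) : Prop :=
  exists (x0 : 'rV[R]_d) (M : 'M[R]_(k, d)),
    S x0 /\ (forall i, S (x0 + row i M)) /\ \rank M = k.

Definition has_aff_dim S (k : nat) : Prop :=
  aff_dim_ge S k /\ forall m, aff_dim_ge S m -> (m <= k)%N.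

Local Open Scope ereal_scope.

Definition LPgapMin A B : \bar R :=
  ereal_inf [set eps%:E | eps in [set eps : R | (0 <= eps)%R /\
     forall c : 'rV[R]_d, (forall i, (0 <= c 0 i)%R) ->
       ereal_inf [set (dotv c a)%:E | a in A]
         <= (1 + eps)%:E * ereal_inf [set (dotv c b)%:E | b in B]]].

Definition is_linear_functional (f : 'rV[R]_d -> R) : Prop :=
  forall (a : R) (u v : 'rV[R]_d), (f (a *: u + v) = a * f u + f v)%R.

(* division with conventions: x/oo = 0, 0/0 = 0, x/0 = +oo for x > 0 *)
Definition ediv (n dd : \bar R) : \bar R :=
  match dd with
  | +oo => 0
  | -oo => 0
  | r%:E => if r == 0%R then (if n == 0 then 0 else +oo) else n * (r^-1)%:E
  end.

Definition rdist_num (f : 'rV[R]_d -> R) A B : \bar R :=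
  ereal_sup [set ereal_inf [set (`|f b - f a|%R)%:E | a in A] | b in B].

Definition rdist_den (f : 'rV[R]_d -> R) A : \bar R :=
  ereal_sup [set e | exists a a', A a /\ A a' /\ e = (`|f a - f a'|%R)%:E].

Definition rdist A B : \bar R :=
  ereal_sup [set ediv (rdist_num f A B) (rdist_den f A) | f in is_linear_functional].

End Defs.

From HB Require Import structures.
From mathcomp Require Import all_boot all_order all_algebra.
From mathcomp Require Import all_classical all_reals ereal.
From mathcomp Require Import ring lra.
Import Order.TTheory GRing.Theory Num.Theory.
Local Open Scope classical_set_scope.
Local Open Scope ring_scope.

Set Implicit Arguments. Unset Strict Implicit. Unset Printing Implicit Defensive.

(* Let F be the set of coordinates on which A is not constantly 1. Since A and B have the
   same dimension, B is also 1 off F; moreover #|F| <= d' and 1 - e_i lies in A for i in F,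
   so a cost c >= 0 supported on F satisfies d' * min_A c <= (d' - 1) * sum c.
   If eps is feasible for LPgapMin and w is linear, the points of A maximising and
   minimising w span a segment of w(A), and the overshoot of w(B) beyond it is controlled
   by the negative resp. positive part of w on F: the bound above and feasibility make it
   at most (d' - 1) eps/(1 + eps) times the length of the segment.
   If eps is infeasible, some c >= 0 and b in B have (1 + eps) c.b < min_A c =: alpha;
   dropping the coordinates off F and truncating c at alpha gives a functional whose
   range on A has length at most (d' - 1) alpha while b stays at distance alpha - c.b,
   so rdist > eps/((1 + eps)(d' - 1)). Inverting eps |-> eps/(1 + eps) gives (i), (ii). *)

Section DotProduct.
Variables (R : realType) (d : nat).
Implicit Types (c x y : 'rV[R]_d).

Lemma dotv0 c : dotv c 0 = 0.
Proof. by rewrite /dotv big1 // => i _; rewrite mxE mulr0. Qed.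

Lemma dotvD c x y : dotv c (x + y) = dotv c x + dotv c y.
Proof. by rewrite /dotv -big_split; apply: eq_bigr => i _; rewrite mxE mulrDr. Qed.

Lemma dotvZ c x a : dotv c (a *: x) = a * dotv c x.
Proof. by rewrite /dotv mulr_sumr; apply: eq_bigr => i _; rewrite mxE mulrCA. Qed.

Lemma dotvN c x : dotv (- c) x = - dotv c x.
Proof. by rewrite /dotv -sumrN; apply: eq_bigr => i _; rewrite mxE mulNr. Qed.

Lemma dotvB c x y : dotv c (x - y) = dotv c x - dotv c y.
Proof. by rewrite dotvD -scaleN1r dotvZ mulN1r. Qed.

Lemma dotv_sum n c (F : 'I_n -> 'rV[R]_d) :
  dotv c (\sum_(k < n) F k) = \sum_(k < n) dotv c (F k).
Proof. exact: (big_morph (dotv c) (dotvD c) (dotv0 c)). Qed.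

Lemma dotv_ge0 c x : (forall i, 0 <= c 0 i) -> (forall i, 0 <= x 0 i) -> 0 <= dotv c x.
Proof. by move=> c0 x0; apply: sumr_ge0 => i _; apply: mulr_ge0. Qed.

Lemma dotv_cube_le c x : (forall i, 0 <= c 0 i) -> cube x -> dotv c x <= \sum_i c 0 i.
Proof. by move=> c0 x_cube; apply: ler_sum => i _; rewrite ler_piMr //; case/andP: (x_cube i). Qed.

Definition mask_row (F : {set 'I_d}) c : 'rV[R]_d := \row_i (if i \in F then c 0 i else 0).

Definition negpart c : 'rV[R]_d := \row_i (if c 0 i < 0 then - c 0 i else 0).

Lemma dotv_mask_row (F : {set 'I_d}) c x : (forall i, i \notin F -> x 0 i = 1) ->
  dotv c x = dotv (mask_row F c) x + \sum_(i | i \notin F) c 0 i.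
Proof.
move=> x1; rewrite /dotv [X in _ + X]big_mkcond -big_split; apply: eq_bigr => i _ /=.
by rewrite mxE; case: ifPn => iF; rewrite ?addr0 // x1 // mul0r add0r mulr1.
Qed.

Lemma dotv_linear_functional c : is_linear_functional (dotv c).
Proof. by move=> a u v; rewrite dotvD dotvZ. Qed.

Lemma linear_functional_dotv (f : 'rV[R]_d -> R) :
  is_linear_functional f -> f = dotv (\row_i f 'e_i).
Proof.
move=> lin_f.
have f0 : f 0 = 0 by have := lin_f 1 0 0; rewrite scale1r addr0 mul1r; lra.
have fD u v : f (u + v) = f u + f v by have := lin_f 1 u v; rewrite scale1r mul1r.
apply/funext => x; rewrite {1}(row_sum_delta x) (big_morph f fD f0) /dotv.
by apply: eq_bigr => i _; rewrite -[_ *: _]addr0 lin_f f0 addr0 mxE mulrC.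
Qed.

End DotProduct.

Section ConvexHull.
Variables (R : realType) (d n : nat) (V : 'I_n -> 'rV[R]_d).

Lemma conv_hull_vertex k : conv_hull V (V k).
Proof.
exists (fun j => (j == k)%:R); split; first by move=> j; case: (j == k).
split; first by rewrite (bigD1 k) //= eqxx big1 ?addr0 // => j /negbTE ->.
by rewrite (bigD1 k) //= eqxx scale1r big1 ?addr0 // => j /negbTE ->; rewrite scale0r.
Qed.

Lemma conv_hull_convex : convex_set (conv_hull V).
Proof.
move=> _ _ t [l [l0 [l1 ->]]] [m [m0 [m1 ->]]] /andP[t0 t1].
exists (fun k => t * l k + (1 - t) * m k); split.
  by move=> k; apply: addr_ge0; apply: mulr_ge0 => //; rewrite subr_ge0.
split; first by rewrite big_split /= -!mulr_sumr l1 m1 !mulr1 addrC subrK.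
rewrite !scaler_sumr -big_split /=; apply: eq_bigr => k _.
by rewrite !scalerA scalerDl.
Qed.

Lemma conv_hull_coord x i : conv_hull V x ->
  exists2 lam : 'I_n -> R, (forall k, 0 <= lam k) /\ \sum_k lam k = 1 &
    x 0 i = \sum_k lam k * V k 0 i.
Proof.
move=> [lam [l0 [l1 ->]]]; exists lam => //.
by rewrite summxE; apply: eq_bigr => k _; rewrite mxE.
Qed.

Lemma conv_hull_dotv_ge c t : (forall k, t <= dotv c (V k)) ->
  forall x, conv_hull V x -> t <= dotv c x.
Proof.
move=> tV _ [lam [l0 [l1 ->]]]; rewrite dotv_sum.
rewrite -[t]mul1r -l1 mulr_suml; apply: ler_sum => k _.
by rewrite dotvZ ler_wpM2l.
Qed.

End ConvexHull.

Section VertexMinimum.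
Variables (R : realType) (d n : nat) (V : 'I_n.+1 -> 'rV[R]_d).
Implicit Types (c : 'rV[R]_d).

Definition vertex_argmin c : 'I_n.+1 := [arg min_(k < ord0) dotv c (V k)]%O.

Lemma vertex_argminP c k : dotv c (V (vertex_argmin c)) <= dotv c (V k).
Proof.
by rewrite /vertex_argmin; case: arg_minP => // k0 _ /(_ k); apply.
Qed.

Lemma conv_hull_argmin c x : conv_hull V x -> dotv c (V (vertex_argmin c)) <= dotv c x.
Proof. exact/conv_hull_dotv_ge/vertex_argminP. Qed.

Lemma ereal_inf_dotv_conv_hull c :
  ereal_inf [set (dotv c x)%:E | x in conv_hull V] = (dotv c (V (vertex_argmin c)))%:E.
Proof.
apply/le_anti/andP; split.
  by apply: ereal_inf_lbound; exists (V (vertex_argmin c)) => //; apply: conv_hull_vertex.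
by apply: le_ereal_inf_tmp => _ [x Ax <-]; rewrite lee_fin conv_hull_argmin.
Qed.

End VertexMinimum.

Definition free_coords (R : realType) (d : nat) (A : set 'rV[R]_d) : {set 'I_d} :=
  [set i | `[< exists2 a, A a & a 0 i != 1 >] ].

Lemma notin_free_coords (R : realType) (d : nat) (A : set 'rV[R]_d) i a :
  i \notin free_coords A -> A a -> a 0 i = 1.
Proof.
rewrite inE => /asboolPn nfree Aa; apply: contra_notP nfree => ai.
by exists a => //; apply/eqP.
Qed.

Lemma aff_dim_coord_const (R : realType) (d d' : nat) (A B : set 'rV[R]_d) i t b :
  A `<=` B -> has_aff_dim A d' -> has_aff_dim B d' ->
  (forall a, A a -> a 0 i = t) -> B b -> b 0 i = t.
Proof.
move=> AB [[x0 [M [Ax0 [AxM rkM]]]] _] [_ maxB] At Bb.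
have [//|bit] := eqVneq (b 0 i) t.
have Mi j : M j i = 0 by have := At _ (AxM j); rewrite !mxE At //; lra.
pose u := b - x0.
have ui : u 0 i != 0 by rewrite !mxE (At _ Ax0) subr_eq0.
have rk_u : \rank u = 1%N.
  by rewrite rank_rV (_ : u != 0) //; apply: contraNneq ui => ->; rewrite mxE.
have u_notin_M : ~~ (u <= M)%MS.
  apply/negP => /submxP[D uD]; move: ui; rewrite uD mxE big1 ?eqxx // => j _.
  by rewrite Mi mulr0.
have cap0 : \rank (u :&: M)%MS = 0%N.
  apply/eqP; rewrite -leqn0 leqNgt; apply: contra u_notin_M => cap_gt0.
  have : \rank (u :&: M)%MS == \rank u by rewrite eqn_leq mxrankS ?capmxSl // rk_u.
  by rewrite (mxrank_leqif_eq (capmxSl u M)) => /eqmxP <-; rewrite capmxSr.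
suff /maxB : aff_dim_ge B (1 + d') by rewrite ltnn.
exists x0, (col_mx u M); split; first exact: AB.
split.
  move=> j; case: (splitP j) => [j1 j_j1 | j2 j_j2].
    rewrite (_ : j = lshift d' j1) ?rowKu; last exact: val_inj.
    by rewrite row_id addrC subrK.
  by rewrite (_ : j = rshift 1 j2) ?rowKd; [exact: AB | exact: val_inj].
by have := mxrank_sum_cap u M; rewrite cap0 addn0 rk_u rkM (addsmxE u M).1.
Qed.

Lemma le_min_sum (R : realType) (I : finType) (x : I -> R) t :
  (forall i, 0 <= x i) -> 0 <= t -> Num.min t (\sum_i x i) <= \sum_i Num.min (x i) t.
Proof.
move=> x_ge0 t_ge0; rewrite ge_min; apply/orP.
have [[j tj]|x_lt_t] := pselect (exists j, t <= x j).
  left; rewrite (bigD1 j) //= (min_r tj) lerDl.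
  by apply: sumr_ge0 => i _; rewrite le_min x_ge0.
right; apply: ler_sum => i _; rewrite min_l // leNgt; apply/negP => /ltW tx.
by apply: x_lt_t; exists i.
Qed.

Section UpClosed01Polytope.
Variables (R : realType) (d n : nat) (V : 'I_n.+1 -> 'rV[R]_d).
Hypotheses (V01 : forall k i, V k 0 i = 0 \/ V k 0 i = 1)
  (upA : upclosed (conv_hull V)).
Local Notation A := (conv_hull V).
Local Notation F := (free_coords A).
Implicit Types (c : 'rV[R]_d).

Lemma vertex01_ge0 k i : 0 <= V k 0 i.
Proof. by case: (V01 k i) => ->. Qed.

Lemma vertex01_le1 k i : V k 0 i <= 1.
Proof. by case: (V01 k i) => ->. Qed.

Lemma vertex_notin_free k i : i \notin F -> V k 0 i = 1.
Proof. by move=> iF; apply: notin_free_coords iF (conv_hull_vertex V k). Qed.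

Lemma conv_hull01_cube : A `<=` @cube R d.
Proof.
move=> x Ax i; have [lam [lam_ge0 lam1] ->] := conv_hull_coord i Ax.
apply/andP; split; first by apply: sumr_ge0 => k _; rewrite mulr_ge0 ?vertex01_ge0.
by rewrite -lam1; apply: ler_sum => k _; rewrite ler_piMr ?vertex01_le1.
Qed.

Lemma upclosed_const1 : A (const_mx 1).
Proof.
apply: (upA (conv_hull_vertex V ord0)); first by move=> i; rewrite mxE ler01 lexx.
by move=> i; rewrite mxE vertex01_le1.
Qed.

Lemma free_coord_vertex0 i : i \in F -> exists k, V k 0 i = 0.
Proof.
rewrite inE => /asboolP[a Aa /eqP ai1]; apply: contra_notP ai1 => no_vertex0.
have [lam [lam_ge0 lam1] ->] := conv_hull_coord i Aa.
rewrite -lam1; apply: eq_bigr => k _.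
by case: (V01 k i) => [Vk0|->]; rewrite ?mulr1 //; case: no_vertex0; exists k.
Qed.

Lemma upclosed_free_coord i y : i \in F -> cube y ->
  (forall j, j != i -> y 0 j = 1) -> A y.
Proof.
move=> /free_coord_vertex0[k Vk0] y_cube y1.
apply: (upA (conv_hull_vertex V k) y_cube) => j.
have [->|ji] := eqVneq j i; first by rewrite Vk0; case/andP: (y_cube i).
by rewrite y1 ?vertex01_le1.
Qed.

Lemma card_free_coords_le d' : has_aff_dim A d' -> (#|F| <= d')%N.
Proof.
move=> [_ maxA]; apply: maxA.
pose M : 'M[R]_(#|F|, d) := \matrix_(j, k) - (k == enum_val j)%:R.
exists (const_mx 1), M; split; first exact: upclosed_const1.
split.
  move=> j; apply: (upclosed_free_coord (enum_valP j)).
    by move=> k; rewrite !mxE; case: eqP => _; rewrite ?subrr ?subr0 ?lexx ?ler01.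
  by move=> k /negbTE kj; rewrite !mxE kj subr0.
apply/eqP; rewrite eqn_leq rank_leq_row /=.
apply: (@mulmx1_min_rank _ _ _ _ _ 1%:M M^T).
apply/matrixP => j j'; rewrite mul1mx !mxE.
under eq_bigr do rewrite !mxE mulrNN -natrM mulnb.
rewrite (bigD1 (enum_val j)) //= eqxx big1 ?addr0; last by move=> k /negbTE ->.
by rewrite (inj_eq enum_val_inj) eq_sym.
Qed.

Lemma dotv_const1 c : dotv c (const_mx 1) = \sum_i c 0 i.
Proof. by apply: eq_bigr => i _; rewrite mxE mulr1. Qed.

Lemma free_lbound_le d' c t : has_aff_dim A d' ->
  (forall i, 0 <= c 0 i) -> (forall i, i \notin F -> c 0 i = 0) ->
  (forall a, A a -> t <= dotv c a) -> d'%:R * t <= (d'%:R - 1) * \sum_i c 0 i.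
Proof.
move=> dimA c_ge0 c_free t_lb; set S := \sum_i c 0 i.
have t_le_S : t <= S by have := t_lb _ upclosed_const1; rewrite dotv_const1.
have t_le_Sc i : i \in F -> t <= S - c 0 i.
  move=> iF; pose y : 'rV[R]_d := \row_j (j != i)%:R.
  have Ay : A y.
    apply: (upclosed_free_coord iF) => [j|j ji]; rewrite mxE ?ji //.
    by case: (j != i); rewrite ?lexx ?ler01.
  apply: le_trans (t_lb _ Ay) _; rewrite /dotv /S (bigD1 i) //= [X in _ <= X - _](bigD1 i) //=.
  rewrite mxE eqxx mulr0 add0r addrAC subrr add0r.
  by apply: ler_sum => j ji; rewrite mxE ji mulr1 lexx.
have sum_F : \sum_(i in F) c 0 i = S.
  by rewrite big_mkcond; apply: eq_bigr => i _; case: ifPn => // /c_free ->.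
have card_t : #|F|%:R * t <= #|F|%:R * S - S.
  have : \sum_(i in F) t <= \sum_(i in F) (S - c 0 i) by apply: ler_sum.
  rewrite sumrB sum_F !sumr_const.
  by rewrite -[t *+ _]mulr_natl -[S *+ _]mulr_natl.
have card_le : #|F|%:R <= d'%:R :> R by rewrite ler_nat card_free_coords_le.
have : 0 <= (d'%:R - #|F|%:R) * (S - t) by rewrite mulr_ge0 // subr_ge0.
nra.
Qed.

Lemma trunc_cost_ge c t : (forall i, 0 <= c 0 i) -> 0 <= t ->
  (forall a, A a -> t <= dotv c a) ->
  forall a, A a -> t <= dotv (\row_i Num.min (c 0 i) t) a.
Proof.
move=> c_ge0 t_ge0 t_lb; apply: conv_hull_dotv_ge => k.
have c_vk_ge0 i : 0 <= c 0 i * V k 0 i by rewrite mulr_ge0 ?vertex01_ge0.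
have := le_min_sum c_vk_ge0 t_ge0; rewrite min_l; last exact: t_lb (conv_hull_vertex V k).
move/le_trans; apply; apply: ler_sum => i _; rewrite mxE /=.
by case: (V01 k i) => ->; rewrite ?mulr0 ?mulr1 ?lexx // ge_min lexx.
Qed.

End UpClosed01Polytope.

Section ExtendedDivision.
Variable R : realType.
Implicit Types (n dd : \bar R).
Local Open Scope ereal_scope.

Lemma ediv_ge0 n dd : 0 <= n -> 0 <= dd -> 0 <= ediv n dd.
Proof.
case: dd => [r||] //= n_ge0; rewrite lee_fin => r_ge0.
case: eqP => [_|_]; first by case: eqP.
by rewrite mule_ge0 // lee_fin invr_ge0.
Qed.

Lemma ediv_le n dd (D T : R) : (0 <= D)%R -> (0 <= T)%R -> 0 <= n ->
  n <= (T * D)%:E -> D%:E <= dd -> ediv n dd <= T%:E.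
Proof.
move=> D_ge0 T_ge0 n_ge0 n_le; case: dd => [r||] //=; rewrite ?lee_fin // => D_le_r.
have [r0|r_neq0] := eqVneq r 0%R.
  rewrite r0 in D_le_r; have D0 : D = 0%R by apply/le_anti/andP.
  suff -> : n = 0 by rewrite eqxx lee_fin.
  by apply/le_anti; rewrite n_ge0 andbT; move: n_le; rewrite D0 mulr0.
have r_gt0 : (0 < r)%R by rewrite lt_neqAle eq_sym r_neq0 (le_trans D_ge0).
apply: le_trans (lee_wpmul2r _ n_le) _; first by rewrite lee_fin invr_ge0 ltW.
by rewrite -EFinM lee_fin ler_pdivrMr // ler_wpM2l.
Qed.

Lemma lt_ediv n dd (N M x : R) : (0 <= x)%R -> (0 < N)%R -> N%:E <= n ->
  0 <= dd -> dd <= M%:E -> (x * M < N)%R -> x%:E < ediv n dd.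
Proof.
move=> x_ge0 N_gt0 N_le_n; case: dd => [r||] //=; rewrite !lee_fin => r_ge0 r_le_M xMN.
have [r0|r_neq0] := eqVneq r 0%R.
  by rewrite ifN ?ltey //; apply: contraTneq N_le_n => ->; rewrite lee_fin -ltNge.
have r_gt0 : (0 < r)%R by rewrite lt_neqAle eq_sym r_neq0.
apply: lt_le_trans (lee_wpmul2r _ N_le_n); last by rewrite lee_fin invr_ge0 ltW.
rewrite -EFinM lte_fin ltr_pdivlMr //; apply: le_lt_trans xMN.
by rewrite ler_wpM2l.
Qed.

End ExtendedDivision.

Section RelativeDistance.
Variables (R : realType) (d : nat).
Implicit Types (A B : set 'rV[R]_d) (f : 'rV[R]_d -> R).

Lemma convex_linear_image_itv A f lo hi y : convex_set A -> is_linear_functional f ->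
  A lo -> A hi -> f lo <= y <= f hi -> exists2 a, A a & f a = y.
Proof.
move=> convA /linear_functional_dotv -> Alo Ahi /andP[lo_y y_hi].
move: (\row_i f 'e_i) lo_y y_hi => w lo_y y_hi.
have [D0|D_neq0] := eqVneq (dotv w hi - dotv w lo) 0.
  by exists lo => //; apply/le_anti; rewrite lo_y /=; lra.
have D_gt0 : 0 < dotv w hi - dotv w lo.
  by rewrite lt_neqAle eq_sym D_neq0 subr_ge0 (le_trans lo_y).
pose t := (y - dotv w lo) / (dotv w hi - dotv w lo).
exists (t *: hi + (1 - t) *: lo).
  apply: convA => //; rewrite divr_ge0 ?subr_ge0 ?ler_pdivrMr //=; lra.
by rewrite dotvD !dotvZ /t; field; rewrite D_neq0.
Qed.

Lemma rdist_ge_ratio A B f : is_linear_functional f ->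
  (ediv (rdist_num f A B) (rdist_den f A) <= rdist A B)%E.
Proof. by move=> lin_f; apply: ereal_sup_ubound; exists f. Qed.

Lemma rdist_num_ge0 A B f b : B b -> (0 <= rdist_num f A B)%E.
Proof.
move=> Bb; apply: le_ereal_sup_tmp; exists (ereal_inf [set (`|f b - f a|)%:E | a in A]).
  by exists b.
by apply: le_ereal_inf_tmp => _ [a Aa <-]; rewrite lee_fin.
Qed.

Lemma rdist_den_ge0 A f a : A a -> (0 <= rdist_den f A)%E.
Proof.
by move=> Aa; apply: le_ereal_sup_tmp; exists 0%:E => //; exists a, a; rewrite subrr normr0.
Qed.

Lemma rdist_ge0 A B a : A a -> A `<=` B -> (0 <= rdist A B)%E.
Proof.
move=> Aa AB; apply: le_trans (rdist_ge_ratio A B (dotv_linear_functional 0)).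
exact: ediv_ge0 (rdist_num_ge0 _ _ (AB _ Aa)) (rdist_den_ge0 _ Aa).
Qed.

Lemma rdist_ratio_le A B f lo hi T : convex_set A -> is_linear_functional f ->
  A `<=` B -> A lo -> A hi -> 0 <= T -> f lo <= f hi ->
  (forall b, B b -> f b - f hi <= T * (f hi - f lo) /\ f lo - f b <= T * (f hi - f lo)) ->
  (ediv (rdist_num f A B) (rdist_den f A) <= T%:E)%E.
Proof.
move=> convA lin_f AB Alo Ahi T_ge0 lo_hi B_near.
have D_ge0 : 0 <= f hi - f lo by rewrite subr_ge0.
apply: (ediv_le D_ge0 T_ge0 (rdist_num_ge0 _ _ (AB _ Alo))).
  apply: ge_ereal_sup => _ [b Bb <-].
  suff [a Aa fa] : exists2 a, A a & `|f b - f a| <= T * (f hi - f lo).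
    by apply: ge_ereal_inf; exists (`|f b - f a|)%:E; [exists a | rewrite lee_fin].
  have [hi_b|b_hi] := ltrP (f hi) (f b).
    exists hi => //; rewrite ger0_norm; last by rewrite subr_ge0 ltW.
    exact: (B_near b Bb).1.
  have [b_lo|lo_b] := ltrP (f b) (f lo).
    exists lo => //; rewrite ler0_norm; last by rewrite subr_le0 ltW.
    by rewrite opprB; exact: (B_near b Bb).2.
  have [a Aa fab] := convex_linear_image_itv convA lin_f Alo Ahi (introT andP (conj lo_b b_hi)).
  by exists a => //; rewrite fab subrr normr0 mulr_ge0.
apply: le_ereal_sup_tmp; exists (`|f hi - f lo|)%:E; first by exists hi, lo.
by rewrite lee_fin ler_norm.
Qed.

Lemma rdist_ratio_gt A B f a0 b m M N x : A a0 ->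
  (forall a, A a -> m <= f a <= M) -> B b -> f b <= m - N ->
  0 <= x -> 0 < N -> x * (M - m) < N ->
  (x%:E < ediv (rdist_num f A B) (rdist_den f A))%E.
Proof.
move=> Aa0 A_bnd Bb fb x_ge0 N_gt0 xMN.
apply: (lt_ediv x_ge0 N_gt0 _ (rdist_den_ge0 _ Aa0) _ xMN).
  apply: le_ereal_sup_tmp; exists (ereal_inf [set (`|f b - f a|)%:E | a in A]).
    by exists b.
  apply: le_ereal_inf_tmp => _ [a Aa <-]; rewrite lee_fin.
  have /andP[ma _] := A_bnd a Aa; rewrite distrC (le_trans _ (ler_norm _)) //; lra.
apply: ge_ereal_sup => _ [a [a' [Aa [Aa' ->]]]]; rewrite lee_fin.
by have /andP[? ?] := A_bnd a Aa; have /andP[? ?] := A_bnd a' Aa'; rewrite ler_norml; lra.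
Qed.

End RelativeDistance.

Definition lpgap_feasible (R : realType) (d : nat) (A B : set 'rV[R]_d) (eps : R) : Prop :=
  0 <= eps /\ forall c : 'rV[R]_d, (forall i, 0 <= c 0 i) ->
    (ereal_inf [set (dotv c a)%:E | a in A]
       <= (1 + eps)%:E * ereal_inf [set (dotv c b)%:E | b in B])%E.

Lemma LPgapMinE (R : realType) (d : nat) (A B : set 'rV[R]_d) :
  LPgapMin A B = ereal_inf [set eps%:E | eps in lpgap_feasible A B].
Proof. by []. Qed.

Lemma LPgapMin_ge0 (R : realType) (d : nat) (A B : set 'rV[R]_d) : (0 <= LPgapMin A B)%E.
Proof. by apply: le_ereal_inf_tmp => _ [eps [eps_ge0 _] <-]; rewrite lee_fin. Qed.

Lemma top_coord_above (R : realType) (w b u : R) : b <= 1 ->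
  w * (b - (if 0 < w then 1 else u)) <= (if w < 0 then - w else 0) * (u - b).
Proof. by move=> b_le1; case: ltrgt0P => w0; nra. Qed.

Lemma top_coord_below (R : realType) (w u v : R) : v <= 1 ->
  (if w < 0 then - w else 0) * (1 - u) <=
  w * ((if 0 < w then 1 else u) - (if 0 < - w then 1 else v)).
Proof. by move=> v_le1; rewrite oppr_gt0; case: ltrgt0P => w0; nra. Qed.

Section UpClosed01PolytopeInConvexSet.
Variables (R : realType) (d n d' : nat) (V : 'I_n.+1 -> 'rV[R]_d) (B : set 'rV[R]_d).
Hypotheses (V01 : forall k i, V k 0 i = 0 \/ V k 0 i = 1)
  (upA : upclosed (conv_hull V)) (Bcube : B `<=` @cube R d) (AB : conv_hull V `<=` B)
  (dimA : has_aff_dim (conv_hull V) d') (dimB : has_aff_dim B d').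
Local Notation A := (conv_hull V).
Local Notation F := (free_coords A).
Implicit Types (c w : 'rV[R]_d).

Lemma sup_notin_free_coords b i : B b -> i \notin F -> b 0 i = 1.
Proof.
by move=> Bb iF; apply: (aff_dim_coord_const AB dimA dimB _ Bb) => a /(notin_free_coords iF).
Qed.

Lemma dim1_sup_eq : d' = 1%N -> A = B.
Proof.
move=> d'1; apply/seteqP; split => // b Bb.
have b1 j : j \notin F -> b 0 j = 1 by apply: sup_notin_free_coords.
have [F0|[i iF]] := set_0Vmem F.
  suff -> : b = const_mx 1 by apply: upclosed_const1.
  by apply/rowP => j; rewrite mxE b1 // F0 inE.
apply: (upclosed_free_coord V01 upA iF (Bcube Bb)) => j ji; apply: b1.
apply: contra ji => jF; apply/eqP.
by apply: (card_le1_eqP _ _) iF jF; rewrite -d'1 card_free_coords_le.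
Qed.

Lemma rdist_gt_gap_violated c b eps : (1 < d')%N -> 0 <= eps ->
  (forall i, 0 <= c 0 i) -> B b -> (1 + eps) * dotv c b < dotv c (V (vertex_argmin V c)) ->
  (((d'%:R - 1)^-1 * (eps / (1 + eps)))%:E < rdist A B)%E.
Proof.
move=> d'_gt1 eps_ge0 c_ge0 Bb gap.
set al := dotv c (V _) in gap; set k := \sum_(i | i \notin F) c 0 i.
set cF := mask_row F c; set t := al - k.
have cF_ge0 i : 0 <= cF 0 i by rewrite mxE; case: ifP.
have dotv_A a : A a -> dotv c a = dotv cF a + k.
  by move=> Aa; apply: dotv_mask_row => i /notin_free_coords; apply.
have t_lb a : A a -> t <= dotv cF a by move=> Aa; rewrite lerBlDr -dotv_A ?conv_hull_argmin.
have t_ge0 : 0 <= t.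
  rewrite /t /al dotv_A ?addrK; last exact: conv_hull_vertex.
  by apply: dotv_ge0 => // i; apply: vertex01_ge0.
set c' := \row_i Num.min (cF 0 i) t.
have c'_ge0 i : 0 <= c' 0 i by rewrite mxE le_min cF_ge0.
have c'_bnd a : A a -> t <= dotv c' a <= d'%:R * t.
  move=> Aa; rewrite (trunc_cost_ge V01 cF_ge0 t_ge0 t_lb Aa) /=.
  apply: le_trans (dotv_cube_le c'_ge0 (conv_hull01_cube V01 Aa)) _.
  apply: (@le_trans _ _ (\sum_(i in F) t)).
    rewrite [X in _ <= X]big_mkcond; apply: ler_sum => i _; rewrite !mxE.
    by case: ifP => _; rewrite ?ge_min ?lexx ?orbT // min_l.
  by rewrite sumr_const -[t *+ _]mulr_natl ler_wpM2r // ler_nat card_free_coords_le.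
have c'b : dotv c' b <= dotv c b - k.
  have dotv_B : dotv c b = dotv cF b + k.
    by apply: dotv_mask_row => i; apply: sup_notin_free_coords.
  rewrite dotv_B addrK.
  apply: ler_sum => i _; rewrite mxE ler_wpM2r ?ge_min ?lexx //.
  by case/andP: (Bcube Bb i).
have cb_ge0 : 0 <= dotv c b by apply: dotv_ge0 => // i; case/andP: (Bcube Bb i).
have K_gt0 : 0 < d'%:R - 1 :> R by rewrite subr_gt0 ltr1n.
set x := (d'%:R - 1)^-1 * (eps / (1 + eps)).
have x_ge0 : 0 <= x by apply: mulr_ge0; [rewrite invr_ge0; lra | apply: divr_ge0; lra].
have N_gt0 : 0 < al - dotv c b by have := mulr_ge0 eps_ge0 cb_ge0; lra.
have c'b_far : dotv c' b <= t - (al - dotv c b) by rewrite /t; lra.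
have t_le_al : t <= al by rewrite lerBlDr lerDl sumr_ge0.
have xMN : x * (d'%:R * t - t) < al - dotv c b.
  have -> : x * (d'%:R * t - t) = eps * t / (1 + eps) by rewrite /x; field; lra.
  rewrite ltr_pdivrMr; last by lra.
  by have := ler_wpM2l eps_ge0 t_le_al; lra.
apply: lt_le_trans (rdist_ge_ratio A B (dotv_linear_functional c')).
exact: (rdist_ratio_gt (conv_hull_vertex V ord0) c'_bnd Bb c'b_far x_ge0 N_gt0 xMN).
Qed.

Lemma lpgap_feasible_dotv eps c b : lpgap_feasible A B eps ->
  (forall i, 0 <= c 0 i) -> B b -> dotv c (V (vertex_argmin V c)) <= (1 + eps) * dotv c b.
Proof.
move=> [eps_ge0 feas] c_ge0 Bb; have := feas c c_ge0.
rewrite ereal_inf_dotv_conv_hull => /le_trans; rewrite -lee_fin EFinM; apply.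
by apply: lee_wpmul2l; [rewrite lee_fin; lra | apply: ereal_inf_lbound; exists b].
Qed.

Lemma lpgap_infeasible_dotv eps : 0 <= eps -> ~ lpgap_feasible A B eps ->
  exists c b, [/\ forall i, 0 <= c 0 i, B b &
                  (1 + eps) * dotv c b < dotv c (V (vertex_argmin V c))].
Proof.
move=> eps_ge0 infeas; apply: contra_notP infeas => no_gap; split=> // c c_ge0.
rewrite ereal_inf_dotv_conv_hull.
set al := dotv c _; have -> : al = (1 + eps) * (al / (1 + eps)).
  by rewrite mulrC divfK //; lra.
rewrite EFinM; apply: lee_wpmul2l; first by rewrite lee_fin; lra.
apply: le_ereal_inf_tmp => _ [b Bb <-]; rewrite lee_fin ler_pdivrMr; last by lra.
by rewrite mulrC leNgt; apply/negP => gap; apply: no_gap; exists c, b.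
Qed.

(* The maximiser of [dotv w] on [A]: raise the coordinates where [w > 0] and copy the
   others from the vertex minimising the negative part of [w] on the free coordinates. *)
Definition top_point w : 'rV[R]_d :=
  \row_i (if 0 < w 0 i then 1 else V (vertex_argmin V (mask_row F (negpart w))) 0 i).

Lemma top_point_in w : A (top_point w).
Proof.
apply: (upA (conv_hull_vertex V (vertex_argmin V (mask_row F (negpart w))))) => i; rewrite mxE.
  by case: ifP; rewrite ?ler01 ?lexx // vertex01_ge0 // vertex01_le1.
by case: ifP; rewrite ?vertex01_le1.
Qed.

Lemma top_point_ge w : dotv w (top_point (- w)) <= dotv w (top_point w).
Proof.
rewrite -subr_ge0 -dotvB; apply: sumr_ge0 => i _; rewrite !mxE.
apply: le_trans (top_coord_below _ _ (vertex01_le1 V01 _ i)).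
by rewrite mulr_ge0 ?subr_ge0 ?vertex01_le1 //; case: ifP => //; lra.
Qed.

Lemma top_point_gap eps w b : (0 < d')%N -> lpgap_feasible A B eps -> B b ->
  dotv w b - dotv w (top_point w) <=
  (d'%:R - 1) * (eps / (1 + eps)) * (dotv w (top_point w) - dotv w (top_point (- w))).
Proof.
move=> d'_gt0 feas Bb; have eps_ge0 := feas.1.
set q := mask_row F (negpart w); set u := V (vertex_argmin V q).
set D := _ - dotv w (top_point (- w)).
have q_ge0 i : 0 <= q 0 i by rewrite !mxE; case: ifP => // _; case: ifP => //; lra.
have q_free i : i \notin F -> q 0 i = 0 by move=> /negbTE iF; rewrite mxE iF.
have above : dotv w b - dotv w (top_point w) <= dotv q u - dotv q b.
  rewrite -!dotvB; apply: ler_sum => i _; have [iF|iF] := boolP (i \in F).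
    by rewrite !mxE iF; apply: top_coord_above; case/andP: (Bcube Bb i).
  rewrite !mxE (negbTE iF) (sup_notin_free_coords Bb iF) vertex_notin_free //.
  by rewrite if_same subrr !mulr0.
have below : \sum_i q 0 i - dotv q u <= D.
  rewrite /D -dotv_const1 -!dotvB; apply: ler_sum => i _; have [iF|iF] := boolP (i \in F).
    by rewrite !mxE iF; apply: top_coord_below; rewrite vertex01_le1.
  by rewrite !mxE (negbTE iF) !vertex_notin_free // !if_same subrr !mulr0.
have qu_le_qb := lpgap_feasible_dotv feas q_ge0 Bb.
have qu_lb := free_lbound_le V01 upA dimA q_ge0 q_free (conv_hull_argmin q).
have K_ge0 : 0 <= d'%:R - 1 :> R by rewrite subr_ge0 ler1n.
have qu_le_D : dotv q u <= (d'%:R - 1) * D by have := ler_wpM2l K_ge0 below; lra.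
set e1 := eps / (1 + eps).
have e1_ge0 : 0 <= e1 by apply: divr_ge0; lra.
have gap_le : dotv q u - dotv q b <= e1 * dotv q u.
  by rewrite /e1 mulrAC ler_pdivlMr; lra.
by have := ler_wpM2l e1_ge0 qu_le_D; lra.
Qed.

Lemma rdist_le_feasible eps : (0 < d')%N -> lpgap_feasible A B eps ->
  (rdist A B <= ((d'%:R - 1) * (eps / (1 + eps)))%:E)%E.
Proof.
move=> d'_gt0 feas; apply: ge_ereal_sup => _ [f lin_f <-].
rewrite (linear_functional_dotv lin_f); set w := \row_i f 'e_i.
have T_ge0 : 0 <= (d'%:R - 1) * (eps / (1 + eps)).
  by apply: mulr_ge0; [rewrite subr_ge0 ler1n | apply: divr_ge0; have := feas.1; lra].
apply: (rdist_ratio_le (conv_hull_convex (V := V)) (dotv_linear_functional w) AB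
  (top_point_in (- w)) (top_point_in w) T_ge0 (top_point_ge w)) => b Bb.
split; first exact: top_point_gap.
by have := top_point_gap (- w) d'_gt0 feas Bb; rewrite opprK !dotvN; lra.
Qed.

Lemma rdist_gt_infeasible eps : (1 < d')%N -> 0 <= eps -> ~ lpgap_feasible A B eps ->
  (((d'%:R - 1)^-1 * (eps / (1 + eps)))%:E < rdist A B)%E.
Proof.
move=> d'_gt1 eps_ge0 /(lpgap_infeasible_dotv eps_ge0)[c [b [c_ge0 Bb gap]]].
exact: rdist_gt_gap_violated gap.
Qed.

End UpClosed01PolytopeInConvexSet.

Definition gap_rdist_bounds (R : realType) (K : R) (L rho : \bar R) : Prop :=
  (forall l : R, L = l%:E -> (((K^-1 * (l / (1 + l)))%:E <= rho)%E)) /\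
  (L = +oo%E -> ((K^-1)%:E <= rho)%E) /\
  (forall r : R, rho = r%:E -> r < K -> ((r / (K - r))%:E <= L)%E) /\
  (rho = K%:E -> L = +oo%E).

Lemma gap_rdist_bounds_neg (R : realType) (K : R) L rho :
  K < 0 -> (0 <= L)%E -> (0 <= rho)%E -> gap_rdist_bounds K L rho.
Proof.
move=> K_lt0 L_ge0 rho_ge0; split; [|split; [|split]].
- move=> l Ll; have l_ge0 : 0 <= l by rewrite -lee_fin -Ll.
  apply: le_trans rho_ge0; rewrite lee_fin mulr_le0_ge0 //; first by rewrite invr_le0 ltW.
  by rewrite divr_ge0 //; lra.
- by move=> _; apply: le_trans rho_ge0; rewrite lee_fin invr_le0 ltW.
- by move=> r rho_r r_lt_K; exfalso; move: rho_ge0; rewrite rho_r lee_fin; lra.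
- by move=> rho_K; exfalso; move: rho_ge0; rewrite rho_K lee_fin; lra.
Qed.

Section GapRdistBoundsPos.
Variables (R : realType) (K : R) (S : set R) (rho : \bar R).
Hypotheses (K_gt0 : 0 < K) (rho_ge0 : (0 <= rho)%E) (S_ge0 : forall e, S e -> 0 <= e)
  (rho_le : forall e, S e -> (rho <= (K * (e / (1 + e)))%:E)%E)
  (rho_gt : forall e, 0 <= e -> ~ S e -> ((K^-1 * (e / (1 + e)))%:E < rho)%E).

Lemma small_rdist_feasible r : rho = r%:E -> K * r < 1 -> S (K * r / (1 - K * r)).
Proof.
move=> rho_r Kr_lt1; have r_ge0 : 0 <= r by rewrite -lee_fin -rho_r.
have Kr_ge0 : 0 <= K * r by rewrite mulr_ge0 // ltW.
have e_ge0 : 0 <= K * r / (1 - K * r) by rewrite divr_ge0 //; lra.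
have [//|notS] := pselect (S (K * r / (1 - K * r))).
have := rho_gt e_ge0 notS; rewrite rho_r lte_fin.
suff -> : K^-1 * (K * r / (1 - K * r) / (1 + K * r / (1 - K * r))) = r by rewrite ltxx.
by field; rewrite subrK oner_neq0 !gt_eqF //; lra.
Qed.

Lemma gap_rdist_bounds_pos : gap_rdist_bounds K (ereal_inf [set e%:E | e in S]) rho.
Proof.
set L := ereal_inf _.
have L_le e : S e -> (L <= e%:E)%E by move=> Se; apply: ereal_inf_lbound; exists e.
split; [|split; [|split]].
- move=> l Ll; have l_ge0 : 0 <= l.
    by rewrite -lee_fin -Ll; apply: le_ereal_inf_tmp => _ [e Se <-]; rewrite lee_fin S_ge0.
  case E: rho => [r||]; [|by rewrite leey|by move: rho_ge0; rewrite E].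
  rewrite lee_fin mulrC ler_pdivrMr // ler_pdivrMr; last by lra.
  have [Kr_lt1|Kr_ge1] := ltP (K * r) 1.
    have := L_le _ (small_rdist_feasible E Kr_lt1); rewrite Ll lee_fin ler_pdivlMr; last by lra.
    by lra.
  have : 0 <= (K * r - 1) * (1 + l) by apply: mulr_ge0; lra.
  lra.
- move=> L_oo; case E: rho => [r||]; [|by rewrite leey|by move: rho_ge0; rewrite E].
  have [Kr_lt1|Kr_ge1] := ltP (K * r) 1.
    by have := L_le _ (small_rdist_feasible E Kr_lt1); rewrite L_oo.
  by rewrite lee_fin -(ler_pM2l K_gt0) mulfV ?gt_eqF.
- move=> r E r_lt_K; apply: le_ereal_inf_tmp => _ [e Se <-].
  have e_ge0 := S_ge0 Se.
  have := rho_le Se; rewrite E !lee_fin mulrA ler_pdivlMr; last by lra.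
  by rewrite ler_pdivrMr; lra.
- move=> E; rewrite /L; suff -> : S = set0 by rewrite image_set0 ereal_inf0.
  apply/seteqP; split => // e Se; have e_ge0 := S_ge0 Se.
  have := rho_le Se; rewrite {}E lee_fin mulrA ler_pdivlMr; last by lra.
  by rewrite mulrDr mulr1 gerDr leNgt K_gt0.
Qed.

End GapRdistBoundsPos.

Theorem mainTheorem6 (R : realType) (d d' : nat) (A B : set 'rV[R]_d) :
  is01polytope A -> upclosed A ->
  convex_set B -> B `<=` @cube R d -> A `<=` B ->
  has_aff_dim A d' -> has_aff_dim B d' ->
  (d' = 1%N -> A = B) /\
  (d' <> 1%N ->
    (* (i) *)
    (forall L : R, LPgapMin A B = L%:E ->
       (((d'%:R - 1)^-1 * (L / (1 + L)))%:E <= rdist A B)%E) /\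
    (LPgapMin A B = +oo%E -> (((d'%:R - 1)^-1)%:E <= rdist A B)%E) /\
    (* (ii) *)
    (forall r : R, rdist A B = r%:E -> r < d'%:R - 1 ->
       ((r / (d'%:R - 1 - r))%:E <= LPgapMin A B)%E) /\
    (rdist A B = (d'%:R - 1)%:E -> LPgapMin A B = +oo%E)).
Proof.
move=> [n [V [V01 ->]]] upA _ Bcube AB dimA dimB.
split; first exact: dim1_sup_eq.
move=> d'_neq1; have rho_ge0 := rdist_ge0 (upclosed_const1 V01 upA) AB.
have [d'_gt1|d'_le1] := ltnP 1 d'.
  rewrite LPgapMinE; apply: gap_rdist_bounds_pos => //.
  - by rewrite subr_gt0 ltr1n.
  - by move=> e [].
  - by move=> e; apply: rdist_le_feasible => //; apply: ltnW.
  - by move=> e; apply: rdist_gt_infeasible.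
have -> : d' = 0%N by case: d' d'_neq1 d'_le1 {dimA dimB rho_ge0} => [|[|]].
by apply: gap_rdist_bounds_neg (LPgapMin_ge0 _ _) rho_ge0; rewrite subr_lt0 ltr01.
Qed.
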